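(* Let $u,v$ be variables and $a<b$ integers. Then $$\sum_{a<i<b}\frac{(qv)^{1/2-i}}{(q^au)_{i-a}\,(q^iuv)_{b-i}}=\frac{1}{1-qv}\left(\frac{(qv)^{3/2-b}}{(q^au)_{b-a-1}}-\frac{(qv)^{1/2-a}}{(q^{a+1}uv)_{b-a-1}}\right).$$ Moreover, $$\sum_{1\le i<b}\frac{(qv)^{1/2-i}}{(q)_{i-1}\,(q^iv)_{b-i}}=\frac{1}{1-qv}\,\frac{(qv)^{3/2-b}}{(q)_{b-2}}.$$
   Context: $(x)_n:=\prod_{j=0}^{n-1}(1-xq^j)$ for $n\ge0$. Identities of rational functions (with a fixed choice of $(qv)^{1/2}$ and integer powers thereof). *)

From mathcomp Require Import all_boot all_order all_algebra.
Set Implicit Arguments. Unset Strict Implicit. Unset Printing Implicit Defensive.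
Import Order.TTheory GRing.Theory Num.Theory.
Local Open Scope ring_scope.

Definition qpoch (K : fieldType) (q x : K) (n : nat) : K :=
  \prod_(j < n) (1 - x * q ^+ j).

Definition open_int_range (a b : int) : seq int :=
  [seq a + (k.+1)%:Z | k <- iota 0 (absz (b - a - 1)%R)].

From mathcomp Require Import all_boot all_order all_algebra.
From mathcomp Require Import zify ring.
Set Implicit Arguments. Unset Strict Implicit. Unset Printing Implicit Defensive.
Import Order.TTheory GRing.Theory Num.Theory.
Local Open Scope ring_scope.

(* Writing w = qv, x = q^a u and i = a + k + 1, the k-th summand is
   w^-(k+1) / ((x)_(k+1) (x w q^k)_(n-k)), and it equals g (k+1) - g k for
   g k = w^-k / ((1 - w) (x)_k (x w q^k)_(n-k)): the sum telescopes.  In the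
   second identity the extra summand i = 1 cancels the boundary term g 0. *)

Lemma qpochSr (K : fieldType) (q x : K) (n : nat) :
  qpoch q x n.+1 = qpoch q x n * (1 - x * q ^+ n).
Proof. by rewrite /qpoch big_ord_recr. Qed.

Lemma qpochSl (K : fieldType) (q x : K) (n : nat) :
  qpoch q x n.+1 = (1 - x) * qpoch q (x * q) n.
Proof.
rewrite /qpoch big_ord_recl expr0 mulr1; congr (_ * _).
by apply: eq_bigr => i _; rewrite exprS mulrA.
Qed.

Lemma qpoch0 (K : fieldType) (q x : K) : qpoch q x 0 = 1.
Proof. exact: big_ord0. Qed.

Lemma qpoch_neq0 (K : fieldType) (q x : K) (n : nat) :
  (forall j : nat, 1 - x * q ^+ j != 0) -> qpoch q x n != 0.
Proof. by move=> x_gen; apply/prodf_neq0 => j _; apply: x_gen. Qed.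

Lemma expfzDrn (K : fieldType) (x : K) (z : int) (n : nat) : x != 0 ->
  x ^ (z + n%:Z) = x ^ z * x ^+ n.
Proof. exact: expfzDr. Qed.

Lemma expfz_sub_even (K : fieldType) (s : K) (z : int) (n : nat) : s != 0 ->
  s ^ (z - 2 * n%:Z) = s ^ z * ((s ^+ 2) ^+ n)^-1.
Proof.
move=> s_neq0; have -> : z - 2 * n%:Z = z + - ((2 * n)%N : int) by lia.
by rewrite expfzDr // -exprnN exprM.
Qed.

Lemma big_open_int_range (R : Type) (idx : R) (op : R -> R -> R)
    (F : int -> R) (a : int) (n : nat) :
  \big[op/idx]_(i <- open_int_range a (a + n.+1%:Z)) F i
  = \big[op/idx]_(0 <= k < n) F (a + k.+1%:Z).
Proof.
rewrite /open_int_range big_map /index_iota subn0.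
by have -> : absz (a + n.+1%:Z - a - 1)%R = n by lia.
Qed.

Section QPochTelescope.

Variables (K : fieldType) (q w : K).
Hypotheses (w_neq0 : w != 0) (w_neq1 : 1 - w != 0).

Lemma qpoch_telescope (x : K) (n : nat) :
  (forall j : nat, 1 - x * q ^+ j != 0) ->
  (forall j : nat, 1 - x * w * q ^+ j != 0) ->
  \sum_(0 <= k < n) (w ^+ k.+1)^-1 / (qpoch q x k.+1 * qpoch q (x * w * q ^+ k) (n - k))
  = (1 - w)^-1 * ((w ^+ n)^-1 / qpoch q x n - (qpoch q (x * w) n)^-1).
Proof.
move=> x_gen xw_gen.
pose g k := (1 - w)^-1 * ((w ^+ k)^-1 / (qpoch q x k * qpoch q (x * w * q ^+ k) (n - k))).
rewrite (telescope_sumr_eq g) //; last first.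
  move=> k /andP[_ lt_kn]; rewrite /g.
  have -> : (n - k = (n - k.+1).+1)%N by rewrite subnSK.
  rewrite qpochSr qpochSl.
  have -> : x * w * q ^+ k * q = x * w * q ^+ k.+1 by rewrite exprSr mulrA.
  have A_neq0 := qpoch_neq0 k x_gen.
  have B_neq0 : qpoch q (x * w * q ^+ k.+1) (n - k.+1) != 0.
    by apply: qpoch_neq0 => j; rewrite -mulrA -exprD; apply: xw_gen.
  have W_neq0 := expf_neq0 k w_neq0; have x_k := x_gen k; have xw_k := xw_gen k.
  rewrite exprS; field.
  by rewrite B_neq0 xw_k A_neq0 W_neq0 w_neq1 x_k w_neq0.
by rewrite /g /= subnn subn0 !expr0 mulr1 !qpoch0 invr1 !mul1r mulr1 -mulrBr.
Qed.

Lemma qpoch_telescope_q (m : nat) :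
  (forall j : nat, 1 - q * q ^+ j != 0) ->
  (forall j : nat, 1 - w * q ^+ j != 0) ->
  \sum_(0 <= k < m.+1) (w ^+ k)^-1 / (qpoch q q k * qpoch q (w * q ^+ k) (m.+1 - k))
  = (1 - w)^-1 * ((w ^+ m)^-1 / qpoch q q m).
Proof.
move=> q_gen w_gen.
have qw_gen j : 1 - q * w * q ^+ j != 0 by rewrite (mulrC q) -mulrA -exprS.
rewrite big_nat_recl //.
under eq_bigr => k _ do rewrite subSS [q ^+ k.+1]exprS mulrA (mulrC w q).
rewrite qpoch_telescope // expr0 invr1 mul1r qpoch0 mul1r subn0 qpochSl.
by rewrite expr0 mulr1 (mulrC w) invfM mulrBr addrC subrK.
Qed.

End QPochTelescope.

Lemma sum_qpoch_open_int_range (K : fieldType) (q u v s : K) (a b : int) :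
  q != 0 -> s != 0 -> s ^+ 2 = q * v -> 1 - q * v != 0 ->
  (forall j : int, 1 - q ^ j * u != 0) ->
  (forall j : int, 1 - q ^ j * u * v != 0) ->
  a < b ->
  \sum_(i <- open_int_range a b)
      s ^ (1 - 2 * i) / (qpoch q (q ^ a * u) (absz (i - a)%R) * qpoch q (q ^ i * u * v) (absz (b - i)%R))
  = (1 - q * v)^-1 *
    (s ^ (3 - 2 * b) / qpoch q (q ^ a * u) (absz (b - a - 1)%R)
     - s ^ (1 - 2 * a) / qpoch q (q ^ (a + 1) * u * v) (absz (b - a - 1)%R)).
Proof.
move=> q_neq0 s_neq0 s2 qv_neq1 u_gen uv_gen lt_ab.
have [n ->] : exists n : nat, b = a + n.+1%:Z by exists (absz (b - a - 1)%R); lia.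
have -> : absz (a + n.+1%:Z - a - 1)%R = n by lia.
set x := q ^ a * u; set w := q * v.
have w_neq0 : w != 0 by rewrite /w -s2 expf_neq0.
have x_gen j : 1 - x * q ^+ j != 0.
  suff -> : x * q ^+ j = q ^ (a + j%:Z) * u by [].
  by rewrite expfzDrn // /x mulrAC.
have xw_gen j : 1 - x * w * q ^+ j != 0.
  suff -> : x * w * q ^+ j = q ^ (a + j.+1%:Z) * u * v by [].
  by rewrite expfzDrn // exprS /x /w; ring.
rewrite big_open_int_range.
transitivity (s ^ (1 - 2 * a) * \sum_(0 <= k < n)
    (w ^+ k.+1)^-1 / (qpoch q x k.+1 * qpoch q (x * w * q ^+ k) (n - k))).
  rewrite mulr_sumr; apply: eq_big_nat => k /andP[_ lt_kn].
  have -> : absz (a + k.+1%:Z - a)%R = k.+1 by lia.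
  have -> : absz (a + n.+1%:Z - (a + k.+1%:Z))%R = (n - k)%N by lia.
  have -> : 1 - 2 * (a + k.+1%:Z) = (1 - 2 * a) - 2 * k.+1%:Z by ring.
  rewrite expfz_sub_even // s2 expfzDrn // mulrA.
  by congr (_ / (_ * qpoch q _ _)); rewrite exprS /x /w; ring.
rewrite qpoch_telescope // -/w.
have -> : 3 - 2 * (a + n.+1%:Z) = (1 - 2 * a) - 2 * n%:Z by ring.
rewrite expfz_sub_even // s2 expfzDrn // expr1.
have -> : q ^ a * q * u * v = x * w by rewrite /x /w; ring.
ring.
Qed.

Lemma sum_qpoch_open_int_range_q (K : fieldType) (q v s : K) (b : int) :
  q != 0 -> s != 0 -> s ^+ 2 = q * v ->
  (forall j : int, j != 0 -> q ^ j != 1) ->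
  (forall j : int, 1 - q ^ j * v != 0) ->
  2 <= b ->
  \sum_(i <- open_int_range 0 b)
      s ^ (1 - 2 * i) / (qpoch q q (absz (i - 1)%R) * qpoch q (q ^ i * v) (absz (b - i)%R))
  = (1 - q * v)^-1 * (s ^ (3 - 2 * b) / qpoch q q (absz (b - 2)%R)).
Proof.
move=> q_neq0 s_neq0 s2 q_nonroot v_gen le2b.
have [m ->] : exists m : nat, b = m.+2%:Z by exists (absz (b - 2)%R); lia.
set w := q * v.
have w_neq0 : w != 0 by rewrite /w -s2 expf_neq0.
have w_neq1 : 1 - w != 0 by have := v_gen 1; rewrite expr1z.
have q_gen j : 1 - q * q ^+ j != 0.
  by rewrite subr_eq0 eq_sym -exprS; apply: (q_nonroot j.+1%:Z).
have w_gen j : 1 - w * q ^+ j != 0.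
  suff -> : w * q ^+ j = q ^ j.+1%:Z * v by [].
  by rewrite /w mulrAC -exprS.
rewrite -{1}[m.+2%:Z]add0r big_open_int_range.
transitivity (s ^ (-1) * \sum_(0 <= k < m.+1)
    (w ^+ k)^-1 / (qpoch q q k * qpoch q (w * q ^+ k) (m.+1 - k))).
  rewrite mulr_sumr; apply: eq_big_nat => k /andP[_ lt_km].
  have -> : absz (0 + k.+1%:Z - 1)%R = k by lia.
  have -> : absz (m.+2%:Z - (0 + k.+1%:Z))%R = (m.+1 - k)%N by lia.
  have -> : 1 - 2 * (0 + k.+1%:Z) = -1 - 2 * k%:Z by lia.
  rewrite expfz_sub_even // s2 add0r.
  by rewrite -mulrA; congr (_ * (_ / (_ * qpoch q _ _))); rewrite /w mulrAC -exprS.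
rewrite (qpoch_telescope_q w_neq0 w_neq1 m q_gen w_gen).
have -> : 3 - 2 * m.+2%:Z = -1 - 2 * m%:Z by lia.
have -> : absz (m.+2%:Z - 2)%R = m by lia.
by rewrite expfz_sub_even // s2; ring.
Qed.

Theorem lemma8p4 (K : fieldType) (q u v s : K) (a b : int) :
  q != 0 -> v != 0 -> s ^+ 2 = q * v ->
  (* genericity: the parameters behave like independent variables *)
  (forall j : int, j != 0 -> q ^ j != 1) ->
  (forall j : int, 1 - q ^ j * u != 0) ->
  (forall j : int, 1 - q ^ j * v != 0) ->
  (forall j : int, 1 - q ^ j * u * v != 0) ->
  a < b ->
  (\sum_(i <- open_int_range a b)
      s ^ (1 - 2 * i) / (qpoch q (q ^ a * u) (absz (i - a)%R) * qpoch q (q ^ i * u * v) (absz (b - i)%R))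
   = (1 - q * v)^-1 *
     (s ^ (3 - 2 * b) / qpoch q (q ^ a * u) (absz (b - a - 1)%R)
      - s ^ (1 - 2 * a) / qpoch q (q ^ (a + 1) * u * v) (absz (b - a - 1)%R)))
  /\
  (2 <= b ->
   \sum_(i <- open_int_range 0 b)
      s ^ (1 - 2 * i) / (qpoch q q (absz (i - 1)%R) * qpoch q (q ^ i * v) (absz (b - i)%R))
   = (1 - q * v)^-1 * (s ^ (3 - 2 * b) / qpoch q q (absz (b - 2)%R))).
Proof.
move=> q_neq0 v_neq0 s2 q_nonroot u_gen v_gen uv_gen lt_ab.
have s_neq0 : s != 0.
  by apply: contra_neq (mulf_neq0 q_neq0 v_neq0) => s0; rewrite -s2 s0 expr0n.
have qv_neq1 : 1 - q * v != 0 by have := v_gen 1; rewrite expr1z.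
split; first exact: sum_qpoch_open_int_range.
exact: sum_qpoch_open_int_range_q.
Qed.
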